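(* Consider the single-storage problem (P1) with round-trip efficiency $\eta\in(0,1]$, i.e. with the constraint $S_t-S_{t-1}\le p_t^+$ replaced by $S_t-S_{t-1}\le\eta\,p_t^+$. With $0\le S_0\le\overline{S}$, $\overline{x}\ge 0$, the problem is feasible and, if the qualified capacity is $\overline{S}$ or $\overline{x}$, the resulting EUE (average over finitely many profiles of $\sum_tp_t^-+$ optimal value) is continuous, piecewise linear and non-increasing in the qualified capacity, so the MRI is non-negative wherever it exists.
   Context: For real $P_t$ (net capacity surplus at hour $t$), $p_t^+=\max\{P_t,0\}$, $p_t^-=\max\{-P_t,0\}$. Problem (P1): minimize $\sum_{t=1}^T\min\{0,S_t-S_{t-1}\}$ over $S_1,\dots,S_T$ subject to $0\le S_t\le\overline{S}$, $-\overline{x}\le S_t-S_{t-1}\le\overline{x}$, $-p_t^-\le S_t-S_{t-1}\le p_t^+$ for all $t$, with $S_0$ a given constant. $\mathrm{MRI}=-\partial\mathrm{EUE}/\partial\mathrm{QC}$. *)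

From HB Require Import structures.
From mathcomp Require Import all_boot all_order all_algebra.
From mathcomp Require Import all_classical all_reals all_analysis.
Set Implicit Arguments. Unset Strict Implicit. Unset Printing Implicit Defensive.
Import Order.TTheory GRing.Theory Num.Theory.
Import numFieldNormedType.Exports.
Local Open Scope classical_set_scope.
Local Open Scope ring_scope.

Section Storage.
Variable R : realType.

Definition pplus (x : R) : R := Num.max x 0.
Definition pminus (x : R) : R := Num.max (- x) 0.

(* Feasible trajectories of (P1) with round-trip efficiency eta, horizon T,
   energy capacity Sbar, power capacity xbar, initial state S0 and net
   capacity surplus profile p (hours t = 1..T).  Only s 0 .. s T matter. *)
Definition feasible (T : nat) (eta Sbar xbar S0 : R) (p : nat -> R)
    (s : nat -> R) : Prop :=
  s 0%N = S0 /\
  forall t : nat, (1 <= t <= T)%N ->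
    [/\ 0 <= s t <= Sbar,
        - xbar <= s t - s t.-1 <= xbar &
        - pminus (p t) <= s t - s t.-1 <= eta * pplus (p t)].

Definition objective (T : nat) (s : nat -> R) : R :=
  \sum_(1 <= t < T.+1) Num.min 0 (s t - s t.-1).

Definition optval (T : nat) (eta Sbar xbar S0 : R) (p : nat -> R) : R :=
  inf [set objective T s | s in feasible T eta Sbar xbar S0 p].

Definition EUE (T K : nat) (eta Sbar xbar S0 : R) (P : 'I_K -> nat -> R) : R :=
  K%:R^-1 * \sum_(k < K)
     (\sum_(1 <= t < T.+1) pminus (P k t) + optval T eta Sbar xbar S0 (P k)).

Definition pw_linear_from (a : R) (f : R -> R) : Prop :=
  exists (n : nat) (b m c : nat -> R),
    [/\ b 0%N = a,
        (forall i, (i < n)%N -> b i < b i.+1),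
        (forall i x, (i < n)%N -> b i <= x <= b i.+1 -> f x = m i * x + c i) &
        (forall x, b n <= x -> f x = m n * x + c n)].

End Storage.

(* The greedy dispatch, which stores as much surplus as the power and energy
   capacities allow and discharges as much as possible during a deficit, is
   optimal for (P1): by induction on the hour it has always discharged at least
   as much as any feasible trajectory, and discharged plus stored at least as
   much.  So the optimal value is the objective of the greedy trajectory, which
   is built from either capacity by sums, scalings, [min] and [max] of affine
   functions and is therefore continuous and piecewise affine.  Enlarging a
   capacity enlarges the feasible set, so the EUE is non-increasing, and a
   non-increasing function has non-positive derivative. *)

From HB Require Import structures.
From mathcomp Require Import all_boot all_order all_algebra.
From mathcomp Require Import all_classical all_reals all_analysis.
From mathcomp Require Import ring lra.
Set Implicit Arguments. Unset Strict Implicit. Unset Printing Implicit Defensive.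
Import Order.TTheory GRing.Theory Num.Theory.
Import numFieldNormedType.Exports.
Local Open Scope classical_set_scope.
Local Open Scope ring_scope.

Section PiecewiseAffine.
Variable R : realType.
Implicit Types (f g : R -> R) (l : R * R) (a c u v x : R).

Definition aff l x : R := l.1 * x + l.2.

Lemma affD l1 l2 x : aff (l1 + l2) x = aff l1 x + aff l2 x.
Proof. by rewrite /aff /=; ring. Qed.

Lemma affB l1 l2 x : aff (l1 - l2) x = aff l1 x - aff l2 x.
Proof. by rewrite /aff /=; ring. Qed.

(* Junk value [0] when [l.1 = 0]; then [aff l] is constant and its sign is
   the same everywhere anyway. *)
Definition aff_root l : R := - l.2 / l.1.

Lemma aff_sign_on l u v : ~~ (u < aff_root l < v) ->
  {in `[u, v], forall x, 0 <= aff l x} \/ {in `[u, v], forall x, aff l x <= 0}.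
Proof.
have [m0|m_neq0] := eqVneq l.1 0.
  rewrite /aff m0 => _; have [c_ge0|c_lt0] := lerP 0 l.2; [left|right] => x _.
    by rewrite mul0r add0r.
  by rewrite mul0r add0r ltW.
have affE x : aff l x = l.1 * (x - aff_root l) by rewrite /aff /aff_root; field.
rewrite negb_and -!leNgt => root_out.
have [m_ge0|m_lt0] := lerP 0 l.1;
  case/orP: root_out => [ru|vr]; [left|right|right|left] => x;
  rewrite in_itv /= affE => /andP[ux xv]; nra.
Qed.

Lemma aff_eq_on_two_points l l' u v : u != v ->
  aff l u = aff l' u -> aff l v = aff l' v -> aff l =1 aff l'.
Proof.
move=> uv Eu Ev.
have /eqP : (l.1 - l'.1) * (u - v) = 0 by move: Eu Ev; rewrite /aff; nra.
rewrite mulf_eq0 !subr_eq0 (negbTE uv) orbF => /eqP slope.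
by move=> x; move: Eu; rewrite /aff slope => /addrI ->.
Qed.

(* [s] contains the breakpoints, [L] the affine pieces. *)
Definition pwaffine f : Prop :=
  continuous f /\ exists (s : seq R) (L : seq (R * R)),
    forall u v, ~~ has (fun b => u < b < v) s ->
      exists2 l, l \in L & {in `[u, v], f =1 aff l}.

Lemma pwaffine_cst c : pwaffine (fun=> c).
Proof.
split; first exact: cst_continuous.
by exists [::], [:: (0, c)] => u v _; exists (0, c) => [|x _]; rewrite ?inE // /aff mul0r add0r.
Qed.

Lemma pwaffine_id : pwaffine (fun x => x).
Proof.
split; first by move=> x; exact: cvg_id.
by exists [::], [:: (1, 0)] => u v _; exists (1, 0) => [|x _]; rewrite ?inE // /aff mul1r addr0.
Qed.

Lemma pwaffineD f g : pwaffine f -> pwaffine g -> pwaffine (fun x => f x + g x).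
Proof.
move=> [fc [s1 [L1 Hf]]] [gc [s2 [L2 Hg]]].
split; first by move=> x; apply: cvgD; [exact: fc | exact: gc].
exists (s1 ++ s2), [seq l1 + l2 | l1 <- L1, l2 <- L2] => u v.
rewrite has_cat negb_or => /andP[/Hf[l1 l1L E1] /Hg[l2 l2L E2]].
exists (l1 + l2); first exact: allpairs_f.
by move=> x xI; rewrite affD E1 ?E2.
Qed.

Lemma pwaffineZ k f : pwaffine f -> pwaffine (fun x => k * f x).
Proof.
move=> [fc [s [L Hf]]]; split.
  by move=> x; apply: cvgM; [exact: cvg_cst | exact: fc].
exists s, [seq (k * l.1, k * l.2) | l <- L] => u v /Hf[l lL E].
exists (k * l.1, k * l.2); first exact: (map_f (fun l => (k * l.1, k * l.2))).
by move=> x xI; rewrite E // /aff /=; ring.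
Qed.

Lemma pwaffineN f : pwaffine f -> pwaffine (fun x => - f x).
Proof. by move=> pf; under eq_fun do rewrite -mulN1r; exact: pwaffineZ. Qed.

Lemma pwaffineB f g : pwaffine f -> pwaffine g -> pwaffine (fun x => f x - g x).
Proof. by move=> pf pg; apply: pwaffineD => //; exact: pwaffineN. Qed.

(* On an interval containing no crossing point of the two lines, one of
   them lies below the other throughout. *)
Lemma pwaffine_min f g : pwaffine f -> pwaffine g ->
  pwaffine (fun x => Num.min (f x) (g x)).
Proof.
move=> [fc [s1 [L1 Hf]]] [gc [s2 [L2 Hg]]].
split; first exact: min_fun_continuous.
exists (s1 ++ s2 ++ [seq aff_root (l1 - l2) | l1 <- L1, l2 <- L2]), (L1 ++ L2).
move=> u v; rewrite !has_cat !negb_or => /and3P[/Hf[l1 l1L E1] /Hg[l2 l2L E2]].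
move=> /hasPn/(_ _ (allpairs_f (fun l1 l2 => aff_root (l1 - l2)) l1L l2L)).
case/aff_sign_on => sign; [exists l2|exists l1]; rewrite ?mem_cat ?l1L ?l2L ?orbT //.
  move=> x xI; have gf : g x <= f x by rewrite E1 // E2 // -subr_ge0 -affB sign.
  by rewrite min_r // E2.
move=> x xI; have fg : f x <= g x by rewrite E1 // E2 // -subr_le0 -affB sign.
by rewrite min_l // E1.
Qed.

Lemma pwaffine_max f g : pwaffine f -> pwaffine g ->
  pwaffine (fun x => Num.max (f x) (g x)).
Proof.
move=> pf pg; under eq_fun do rewrite -[Num.max _ _]opprK oppr_max.
by apply: pwaffineN; apply: pwaffine_min; exact: pwaffineN.
Qed.

Lemma pwaffine_sum (I : Type) (r : seq I) (P : pred I) (F : I -> R -> R) :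
  (forall i, pwaffine (F i)) -> pwaffine (fun x => \sum_(i <- r | P i) F i x).
Proof.
move=> HF; elim: r => [|i r IH].
  by under eq_fun do rewrite big_nil; exact: pwaffine_cst.
under eq_fun do rewrite big_cons.
by case: (P i) => //; exact: pwaffineD.
Qed.

Lemma affine_on_ray f c : (forall v, exists l, {in `[c, v], f =1 aff l}) ->
  exists l, forall x, c <= x -> f x = aff l x.
Proof.
move=> Hv; have [l0 E0] := Hv (c + 1); exists l0 => x cx.
set w := Num.max x (c + 1); have [l E] := Hv w.
have c_lt : c < c + 1 by rewrite ltrDl.
have c1_le : c + 1 <= w by rewrite le_max lexx orbT.
have x_le : x <= w by rewrite le_max lexx.
have c_le : c <= w := le_trans (ltW c_lt) c1_le.
have same : aff l =1 aff l0.
  apply: (aff_eq_on_two_points (negbT (lt_eqF c_lt)));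
  by rewrite -E ?E0 // in_itv /= ?lexx ?c_le ?c1_le ?ltW.
by rewrite E ?same // in_itv /= cx.
Qed.

Lemma breakpoints_from a (s : seq R) : exists (n : nat) (b : nat -> R),
  [/\ b 0%N = a, (forall i, (i < n)%N -> b i < b i.+1),
      (forall i, (i < n)%N -> ~~ has (fun x => b i < x < b i.+1) s) &
      (forall v, ~~ has (fun x => b n < x < v) s)].
Proof.
pose bs := a :: sort <=%O (undup [seq x <- s | a < x]).
pose n := (size bs).-1; pose b i := nth 0 bs i.
have size_bs : size bs = n.+1 by [].
have bs_sorted : sorted <%O bs.
  rewrite /= lt_path_sortedE sort_lt_sorted undup_uniq andbT.
  by apply/allP => x; rewrite mem_sort mem_undup mem_filter => /andP[].
have b_lt i j : (i <= n)%N -> (j <= n)%N -> (b i < b j) = (i < j)%N.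
  by move=> iN jN; rewrite /b lt_sorted_ltn_nth // inE size_bs ltnS.
have b_le i j : (i <= n)%N -> (j <= n)%N -> (b i <= b j) = (i <= j)%N.
  by move=> iN jN; rewrite /b lt_sorted_leq_nth // inE size_bs ltnS.
have s_above i x : (i <= n)%N -> x \in s -> b i < x ->
    exists2 j, (i < j <= n)%N & x = b j.
  move=> iN xs bx.
  have ax : a < x by rewrite (le_lt_trans _ bx) // -[a]/(b 0%N) b_le.
  have xbs : x \in bs by rewrite inE mem_sort mem_undup mem_filter ax xs orbT.
  have jN : (index x bs <= n)%N by rewrite -ltnS -size_bs index_mem.
  exists (index x bs); last by rewrite /b nth_index.
  by rewrite jN andbT -(b_lt i) // /b nth_index.
exists n, b; split => // [i iN|i iN|v].
- by rewrite b_lt // ltnW.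
- apply/hasPn => x xs; apply/negP => /andP[bx xb].
  have [j /andP[ij jN] xE] := s_above i x (ltnW iN) xs bx.
  by move: xb; rewrite xE b_lt // ltnNge ij.
- apply/hasPn => x xs; apply/negP => /andP[bx _].
  have [j /andP[nj jN] _] := s_above n x (leqnn n) xs bx.
  by move: (leq_trans nj jN); rewrite ltnn.
Qed.

Lemma pwaffine_pw_linear_from a f : pwaffine f -> pw_linear_from a f.
Proof.
move=> [_ [s [L Hf]]].
have [n [b [b0 b_lt gap gap_ray]]] := breakpoints_from a s.
have piece i : exists l, (i < n)%N -> {in `[b i, b i.+1], f =1 aff l}.
  have [iN|_] := ltnP i n; last by exists 0.
  by have [l _ E] := Hf _ _ (gap i iN); exists l.
have [l Hl] := choice piece.
have [lr Hr] : exists l, forall x, b n <= x -> f x = aff l x.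
  by apply: affine_on_ray => v; have [l' _ E] := Hf _ _ (gap_ray v); exists l'.
pose m i := if (i < n)%N then l i else lr.
exists n, b, (fun i => (m i).1), (fun i => (m i).2); split => //.
- by move=> i x iN xI; rewrite /m iN; apply: Hl; rewrite ?in_itv.
- by move=> x bx; rewrite /m ltnn; exact: Hr.
Qed.

End PiecewiseAffine.

Section GreedyDispatch.
Variable R : realType.
Implicit Types (x : R) (p : nat -> R).

Lemma gt0_pplus x : 0 < x -> pplus x = x.
Proof. by move=> x_gt0; rewrite /pplus max_l // ltW. Qed.

Lemma gt0_pminus x : 0 < x -> pminus x = 0.
Proof. by move=> x_gt0; rewrite /pminus max_r // oppr_le0 ltW. Qed.

Lemma le0_pplus x : x <= 0 -> pplus x = 0.
Proof. by move=> x_le0; rewrite /pplus max_r. Qed.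

Lemma le0_pminus x : x <= 0 -> pminus x = - x.
Proof. by move=> x_le0; rewrite /pminus max_l // oppr_ge0. Qed.

Lemma min_cap_bounds {c y : R} : 0 <= c -> 0 <= y ->
  [/\ 0 <= Num.min c y, Num.min c y <= c & Num.min c y <= y].
Proof. by move=> c0 y0; rewrite le_min c0 y0 !ge_min !lexx orbT. Qed.

Variables (eta Sbar xbar : R).
Hypotheses (eta_ge0 : 0 <= eta) (xbar_ge0 : 0 <= xbar).

Definition greedy_step (pt s : R) : R :=
  Num.max 0 (Num.min Sbar (s + Num.min xbar (eta * pplus pt))
             - Num.min xbar (pminus pt)).

Fixpoint greedy_traj (S0 : R) p (t : nat) : R :=
  if t is t'.+1 then greedy_step (p t) (greedy_traj S0 p t') else S0.

Lemma greedy_step_charge pt s : 0 < pt -> 0 <= s <= Sbar ->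
  greedy_step pt s = Num.min Sbar (s + Num.min xbar (eta * pt)).
Proof.
move=> pt_gt0 /andP[s_ge0 s_le]; rewrite /greedy_step gt0_pplus // gt0_pminus //.
have [u_ge0 _ _] := min_cap_bounds xbar_ge0 (mulr_ge0 eta_ge0 (ltW pt_gt0)).
by rewrite (@min_r _ _ xbar 0) // subr0 max_r // le_min (le_trans s_ge0 s_le) addr_ge0.
Qed.

Lemma greedy_step_discharge pt s : pt <= 0 -> s <= Sbar ->
  greedy_step pt s = Num.max 0 (s - Num.min xbar (- pt)).
Proof.
move=> pt_le0 s_le; rewrite /greedy_step le0_pplus // le0_pminus // mulr0.
by rewrite (@min_r _ _ xbar 0) // addr0 min_r.
Qed.

Lemma greedy_step_feasible pt s : 0 <= s <= Sbar ->
  [/\ 0 <= greedy_step pt s <= Sbar,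
      - xbar <= greedy_step pt s - s <= xbar &
      - pminus pt <= greedy_step pt s - s <= eta * pplus pt].
Proof.
move=> sI; have /andP[s_ge0 s_le] := sI.
have [pt_gt0|pt_le0] := ltrP 0 pt.
  rewrite greedy_step_charge // gt0_pplus // gt0_pminus //.
  have [u_ge0 u_le u_le_ep] := min_cap_bounds xbar_ge0 (mulr_ge0 eta_ge0 (ltW pt_gt0)).
  set u := Num.min xbar (eta * pt) in u_ge0 u_le u_le_ep *.
  have : [&& Num.min Sbar (s + u) <= Sbar, Num.min Sbar (s + u) <= s + u
           & s <= Num.min Sbar (s + u)].
    by rewrite !ge_min !lexx orbT le_min s_le lerDl u_ge0.
  by move=> /and3P[? ? ?]; split; apply/andP; split; lra.
rewrite greedy_step_discharge // le0_pplus // le0_pminus // mulr0.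
have [l_ge0 l_le l_le_p] := min_cap_bounds xbar_ge0 (le0_cp pt_le0).1.
set l := Num.min xbar (- pt) in l_ge0 l_le l_le_p *.
have : [&& 0 <= Num.max 0 (s - l), s - l <= Num.max 0 (s - l)
         & Num.max 0 (s - l) <= s].
  by rewrite !le_max !lexx orbT ge_max s_ge0 gerDl oppr_le0 l_ge0.
by move=> /and3P[? ? ?]; split; apply/andP; split; lra.
Qed.

Lemma objectiveS t (x : nat -> R) :
  objective t.+1 x = objective t x + Num.min 0 (x t.+1 - x t).
Proof. by rewrite /objective big_nat_recr. Qed.

(* [Og] and [Os] are the objectives accumulated so far by the greedy and by a
   feasible trajectory: the greedy has discharged at least as much, and has
   discharged plus kept at least as much. *)
Lemma greedy_step_dominates pt g s s' Og Os :
  0 <= g <= Sbar -> 0 <= s' <= Sbar ->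
  - xbar <= s' - s <= xbar -> - pminus pt <= s' - s <= eta * pplus pt ->
  Og <= Os -> Og - g <= Os - s ->
  let Og' := Og + Num.min 0 (greedy_step pt g - g) in
  let Os' := Os + Num.min 0 (s' - s) in
  Og' <= Os' /\ Og' - greedy_step pt g <= Os' - s'.
Proof.
move=> gI /andP[s'_ge0 s'_le] /andP[dx1 dx2] /andP[dp1 dp2] O1 O2 /=.
have /andP[g_ge0 g_le] := gI.
have [pt_gt0|pt_le0] := ltrP 0 pt.
  rewrite gt0_pminus // oppr0 in dp1; rewrite gt0_pplus // in dp2.
  rewrite greedy_step_charge //; set u := Num.min xbar (eta * pt).
  set g' := Num.min Sbar (g + u).
  have ds_le : s' - s <= u by rewrite le_min dx2.
  have g_le' : g <= g' by rewrite le_min g_le lerDl (le_trans dp1 ds_le).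
  have s'_le' : s' + (Og - Os) <= g' by rewrite le_min; apply/andP; split; lra.
  have -> : Num.min 0 (g' - g) = 0 by rewrite min_l // subr_ge0.
  have -> : Num.min 0 (s' - s) = 0 by rewrite min_l.
  by rewrite !addr0; split; lra.
rewrite le0_pminus // opprK in dp1; rewrite le0_pplus // mulr0 in dp2.
rewrite greedy_step_discharge //; set l := Num.min xbar (- pt).
set g' := Num.max 0 (g - l).
have dl : s - s' <= l by rewrite le_min; apply/andP; split; lra.
have g'_le : g' <= g.
  by rewrite ge_max g_ge0 gerDl oppr_le0 (le_trans _ dl) // subr_ge0; lra.
have g'_le' : g' <= (Os - Og) + (s' - s) + g.
  by rewrite ge_max; apply/andP; split; lra.
have -> : Num.min 0 (g' - g) = g' - g by rewrite min_r // subr_le0.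
have -> : Num.min 0 (s' - s) = s' - s by rewrite min_r.
by split; lra.
Qed.

Lemma greedy_traj_bounds S0 p t : 0 <= S0 <= Sbar -> 0 <= greedy_traj S0 p t <= Sbar.
Proof. by move=> S0I; elim: t => [//|t IH]; case: (greedy_step_feasible (p t.+1) IH). Qed.

Lemma greedy_traj_feasible T S0 p : 0 <= S0 <= Sbar ->
  feasible T eta Sbar xbar S0 p (greedy_traj S0 p).
Proof.
move=> S0I; split=> // -[//|t] _.
exact: greedy_step_feasible (greedy_traj_bounds p t S0I).
Qed.

Lemma greedy_traj_optimal T S0 p s : 0 <= S0 <= Sbar ->
  feasible T eta Sbar xbar S0 p s -> objective T (greedy_traj S0 p) <= objective T s.
Proof.
move=> S0I [s0 Hs].
suff /(_ T (leqnn T)) [] : forall t, (t <= T)%N ->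
  objective t (greedy_traj S0 p) <= objective t s /\
  objective t (greedy_traj S0 p) - greedy_traj S0 p t <= objective t s - s t by [].
elim=> [|t IH] tT; first by rewrite /objective !big_geq //= s0; lra.
have [IH1 IH2] := IH (ltnW tT).
have [s'I dx dp] := Hs t.+1 tT.
by rewrite !objectiveS; apply: greedy_step_dominates => //; exact: greedy_traj_bounds.
Qed.

Lemma optval_greedy_traj T S0 p : 0 <= S0 <= Sbar ->
  optval T eta Sbar xbar S0 p = objective T (greedy_traj S0 p).
Proof.
move=> S0I; set E := [set objective T s | s in feasible T eta Sbar xbar S0 p].
have Eg : E (objective T (greedy_traj S0 p)) by exists (greedy_traj S0 p); [exact: greedy_traj_feasible|].
have lb : lbound E (objective T (greedy_traj S0 p)).
  by move=> _ [s fs <-]; exact: greedy_traj_optimal.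
apply/eqP; rewrite eq_le; apply/andP; split.
- by apply: ge_inf Eg; exists (objective T (greedy_traj S0 p)).
- by apply: lb_le_inf lb; exists (objective T (greedy_traj S0 p)).
Qed.

End GreedyDispatch.

Section ValueFunction.
Variable R : realType.
Implicit Types (E f g : R -> R) (p : nat -> R).

Lemma pw_linear_from_eq a f g : (forall x, a <= x -> f x = g x) ->
  pw_linear_from a g -> pw_linear_from a f.
Proof.
move=> fg [n [b [m [c [b0 b_lt Hpiece Hray]]]]].
have b_ge i : (i <= n)%N -> a <= b i.
  elim: i => [|i IH] iN; first by rewrite b0.
  exact: le_trans (IH (ltnW iN)) (ltW (b_lt i iN)).
exists n, b, m, c; split => // [i x iN /andP[bx xb]|x bx].
  by rewrite fg ?(Hpiece i) ?bx // (le_trans (b_ge i (ltnW iN))).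
by rewrite fg ?Hray // (le_trans (b_ge n (leqnn n))).
Qed.

Lemma nonincreasing_derive1_le0 E a q : a < q ->
  (forall q1 q2, a <= q1 -> q1 <= q2 -> E q2 <= E q1) ->
  derivable E q 1 -> derive1 E q <= 0.
Proof.
move=> aq E_mono dE; apply: limr_le.
  under eq_fun; first (move=> h; rewrite -{2}(scaler1 h); over).
  exact: dE.
near=> h.
have h0 : h != 0 by near: h; exact: nbhs_dnbhs_neq.
have ha : a <= h + q.
  have : `|h| < q - a by near: h; apply: dnbhs0_lt; rewrite subr_gt0.
  by rewrite ltr_norml => /andP[? ?]; lra.
move: h0; rewrite neq_lt => /orP[h_lt0|h_gt0].
- by rewrite nmulr_rle0 ?invr_lt0 // subr_ge0; apply: E_mono => //; lra.
- by rewrite pmulr_rle0 ?invr_gt0 // subr_le0; apply: E_mono; lra.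
Unshelve. all: end_near.
Qed.

Lemma value_function_properties E g a : pwaffine g ->
  (forall q, a <= q -> E q = g q) ->
  (forall q1 q2, a <= q1 -> q1 <= q2 -> E q2 <= E q1) ->
  [/\ {within [set q : R | a <= q], continuous E}, pw_linear_from a E,
      (forall q1 q2 : R, a <= q1 -> q1 <= q2 -> E q2 <= E q1) &
      (forall q : R, a < q -> derivable E q 1 -> 0 <= - derive1 E q)].
Proof.
move=> pg Eg E_mono; split => //.
- apply: (@subspace_eq_continuous _ _ _ g); last exact: continuous_subspaceT pg.1.
  by move=> q; rewrite inE => aq; exact/esym/Eg.
- exact: pw_linear_from_eq Eg (pwaffine_pw_linear_from a pg).
- by move=> q aq dE; rewrite oppr_ge0; exact: nonincreasing_derive1_le0 aq E_mono dE.
Qed.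

Lemma feasible_le T eta Sbar Sbar' xbar xbar' S0 p s :
  Sbar <= Sbar' -> xbar <= xbar' ->
  feasible T eta Sbar xbar S0 p s -> feasible T eta Sbar' xbar' S0 p s.
Proof.
move=> SS xx [s0 Hs]; split => // t tT.
have [/andP[? ?] /andP[? ?] dp] := Hs t tT.
by split => //; apply/andP; split; lra.
Qed.

Definition greedy_EUE T K (eta Sbar xbar S0 : R) (P : 'I_K -> nat -> R) : R :=
  K%:R^-1 * \sum_(k < K) (\sum_(1 <= t < T.+1) pminus (P k t)
                          + objective T (greedy_traj eta Sbar xbar S0 (P k))).

Lemma EUE_greedy T K eta Sbar xbar S0 (P : 'I_K -> nat -> R) :
  0 <= eta -> 0 <= xbar -> 0 <= S0 <= Sbar ->
  EUE T eta Sbar xbar S0 P = greedy_EUE T eta Sbar xbar S0 P.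
Proof.
move=> eta_ge0 xbar_ge0 S0I; rewrite /EUE /greedy_EUE; congr (_ * _).
by apply: eq_bigr => k _; rewrite optval_greedy_traj.
Qed.

Lemma EUE_le T K eta S0 (P : 'I_K -> nat -> R) Sbar Sbar' xbar xbar' :
  0 <= eta -> 0 <= xbar -> 0 <= S0 <= Sbar -> Sbar <= Sbar' -> xbar <= xbar' ->
  EUE T eta Sbar' xbar' S0 P <= EUE T eta Sbar xbar S0 P.
Proof.
move=> eta_ge0 xbar_ge0 S0I SS xx.
have S0I' : 0 <= S0 <= Sbar' by case/andP: S0I => -> /le_trans->.
have xbar'_ge0 := le_trans xbar_ge0 xx.
rewrite /EUE; apply: ler_wpM2l; first by rewrite invr_ge0.
apply: ler_sum => k _; rewrite lerD2l !optval_greedy_traj //.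
by apply: greedy_traj_optimal => //; apply: feasible_le SS xx _; exact: greedy_traj_feasible.
Qed.

Lemma pwaffine_greedy_traj_energy eta xbar S0 p t :
  pwaffine (fun Sbar => greedy_traj eta Sbar xbar S0 p t).
Proof.
elim: t => [|t IH] /=; first exact: pwaffine_cst.
apply: pwaffine_max; first exact: pwaffine_cst.
apply: pwaffineB; last exact: pwaffine_cst.
by apply: pwaffine_min; [exact: pwaffine_id | apply: pwaffineD => //; exact: pwaffine_cst].
Qed.

Lemma pwaffine_greedy_traj_power eta Sbar S0 p t :
  pwaffine (fun xbar => greedy_traj eta Sbar xbar S0 p t).
Proof.
elim: t => [|t IH] /=; first exact: pwaffine_cst.
apply: pwaffine_max; first exact: pwaffine_cst.
apply: pwaffineB; last by apply: pwaffine_min; [exact: pwaffine_id | exact: pwaffine_cst].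
apply: pwaffine_min; first exact: pwaffine_cst.
by apply: pwaffineD => //; apply: pwaffine_min; [exact: pwaffine_id | exact: pwaffine_cst].
Qed.

Lemma pwaffine_greedy_EUE T K eta S0 (P : 'I_K -> nat -> R) (Sb xb : R -> R) :
  (forall p t, pwaffine (fun q => greedy_traj eta (Sb q) (xb q) S0 p t)) ->
  pwaffine (fun q => greedy_EUE T eta (Sb q) (xb q) S0 P).
Proof.
move=> pg; apply: pwaffineZ; apply: pwaffine_sum => k.
apply: pwaffineD; first exact: pwaffine_cst.
apply: pwaffine_sum => t; apply: pwaffine_min; first exact: pwaffine_cst.
exact: pwaffineB.
Qed.

End ValueFunction.

Theorem mainTheorem7 (R : realType) (T K : nat) (eta Sbar xbar S0 : R)
    (P : 'I_K -> nat -> R) :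
  (0 < K)%N -> 0 < eta <= 1 -> 0 <= S0 <= Sbar -> 0 <= xbar ->
  (* feasibility *)
  (forall k : 'I_K, exists s : nat -> R, feasible T eta Sbar xbar S0 (P k) s) /\
  (* qualified capacity = energy capacity Sbar (domain Sbar >= S0) *)
  (let E := fun q : R => EUE T eta q xbar S0 P in
   [/\ {within [set q : R | S0 <= q], continuous E},
       pw_linear_from S0 E,
       (forall q1 q2 : R, S0 <= q1 -> q1 <= q2 -> E q2 <= E q1) &
       (forall q : R, S0 < q -> derivable E q 1 -> 0 <= - derive1 E q)]) /\
  (* qualified capacity = power capacity xbar (domain xbar >= 0) *)
  (let E := fun q : R => EUE T eta Sbar q S0 P in
   [/\ {within [set q : R | 0 <= q], continuous E},
       pw_linear_from 0 E,
       (forall q1 q2 : R, 0 <= q1 -> q1 <= q2 -> E q2 <= E q1) &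
       (forall q : R, 0 < q -> derivable E q 1 -> 0 <= - derive1 E q)]).
Proof.
move=> _ /andP[eta_gt0 _] S0I xbar_ge0; have eta_ge0 := ltW eta_gt0.
have /andP[S0_ge0 _] := S0I.
split.
  by move=> k; exists (greedy_traj eta Sbar xbar S0 (P k)); exact: greedy_traj_feasible.
split => E.
- apply: (value_function_properties
    (@pwaffine_greedy_EUE R T K eta S0 P id (fun=> xbar) _)) => [p t|q S0q|q1 q2 S0q1 q12].
  + exact: pwaffine_greedy_traj_energy.
  + by rewrite /E EUE_greedy ?S0_ge0.
  + by apply: EUE_le; rewrite ?S0_ge0.
- apply: (value_function_properties
    (@pwaffine_greedy_EUE R T K eta S0 P (fun=> Sbar) id _)) => [p t|q q_ge0|q1 q2 q1_ge0 q12].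
  + exact: pwaffine_greedy_traj_power.
  + by rewrite /E EUE_greedy.
  + exact: EUE_le.
Qed.
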